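(* Let $T\in RB(n)$ with $n\ge 2$. Then $ES_T(i)=FP_T(i)$ holds for all $i\in[n]$ and for all assignments of strictly positive edge lengths to $T$ if and only if $T$ is a semi-balanced tree.
   Context: $RB(n)$ is the set of rooted binary phylogenetic trees with leaf set $[n]$ (every non-leaf vertex has out-degree 2). Each edge has length $l(e)>0$, and $n(e)$ is the number of leaves below $e$. $FP_T(i)=\sum_{e\in P(T;\rho,i)} l(e)/n(e)$ and $ES_T(i)=\sum_{e\in P(T;\rho,i)} l(e)/2^{k(e,i)}$, where $P(T;\rho,i)$ is the path from the root $\rho$ to leaf $i$ and $k(e,i)$ is the number of edges strictly between $e$ and $i$ on it. The fully balanced tree of height $h\ge 0$ is the rooted binary tree with $2^h$ leaves in which every leaf is separated from the root by exactly $h$ edges (for $h=0$ it is a single leaf). A rooted binary tree $T$ is semi-balanced if the two maximal pending subtrees rooted at the two children of the root are fully balanced trees of heights $h'$ and $h''$, not necessarily equal. *)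

From Stdlib Require Import Reals List Permutation.
Import ListNotations.
Open Scope R_scope.

Inductive tree : Type :=
| Leaf : nat -> tree
| Node : tree -> tree -> tree.

Fixpoint leaves (t : tree) : list nat :=
  match t with
  | Leaf i => [i]
  | Node a b => leaves a ++ leaves b
  end.

Definition is_RB (n : nat) (t : tree) : Prop :=
  Permutation (leaves t) (seq 1 n).

(* A vertex is addressed by the sequence of left/right choices from the
   root (stored most-recent-first: the child address is  b :: addr ).
   Every non-root vertex v is the lower endpoint of a unique edge, so an
   edge-length assignment is a function  len : list bool -> R  (its
   values on addresses not in the tree are irrelevant). *)
Definition lengths := list bool -> R.

Fixpoint depth_in (t : tree) (i : nat) : nat :=
  match t with
  | Leaf _ => 0
  | Node a b =>
      if in_dec Nat.eq_dec i (leaves a) then S (depth_in a i)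
      else S (depth_in b i)
  end.

Fixpoint FP_aux (t : tree) (addr : list bool) (len : lengths) (i : nat) : R :=
  match t with
  | Leaf _ => 0
  | Node a b =>
      if in_dec Nat.eq_dec i (leaves a) then
        len (false :: addr) / INR (length (leaves a)) + FP_aux a (false :: addr) len i
      else if in_dec Nat.eq_dec i (leaves b) then
        len (true :: addr) / INR (length (leaves b)) + FP_aux b (true :: addr) len i
      else 0
  end.

Definition FP (t : tree) (len : lengths) (i : nat) : R := FP_aux t [] len i.

(* ES_T(i) = sum over edges e on the root-to-i path of l(e)/2^{k(e,i)},
   where k(e,i) = number of edges strictly between e and i, i.e. the depth
   of i in the subtree hanging below e. *)
Fixpoint ES_aux (t : tree) (addr : list bool) (len : lengths) (i : nat) : R :=
  match t with
  | Leaf _ => 0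
  | Node a b =>
      if in_dec Nat.eq_dec i (leaves a) then
        len (false :: addr) / 2 ^ (depth_in a i) + ES_aux a (false :: addr) len i
      else if in_dec Nat.eq_dec i (leaves b) then
        len (true :: addr) / 2 ^ (depth_in b i) + ES_aux b (true :: addr) len i
      else 0
  end.

Definition ES (t : tree) (len : lengths) (i : nat) : R := ES_aux t [] len i.

Fixpoint fully_balanced (t : tree) (h : nat) : Prop :=
  match t, h with
  | Leaf _, O => True
  | Node a b, S h' => fully_balanced a h' /\ fully_balanced b h'
  | _, _ => False
  end.

Definition semi_balanced (t : tree) : Prop :=
  match t with
  | Leaf _ => False
  | Node a b => exists h1 h2, fully_balanced a h1 /\ fully_balanced b h2
  end.

From Stdlib Require Import Reals List Permutation Lra Lia.
Import ListNotations.
Open Scope R_scope.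

(* Both ES_T(i) and FP_T(i) are sums, over the edges e of the root-to-i
   path, of l(e) times a coefficient: 1/2^{k(e,i)} for ES and 1/n(e) for
   FP.  Since the lengths can be varied edge by edge, the two sums agree
   for all positive lengths iff the coefficients agree edge by edge, i.e.
   iff 2^{k(e,i)} = n(e) for every edge e above every leaf i.  Inside the
   subtree below e this says that every leaf of that subtree has the same
   depth d with 2^d leaves, which is exactly being fully balanced. *)

Lemma leaves_nonempty (t : tree) : exists i, In i (leaves t).
Proof.
  induction t as [k | a [x Hx] b _]; simpl.
  - exists k; auto.
  - exists x; apply in_or_app; auto.
Qed.

Lemma NoDup_app_disjoint (l1 l2 : list nat) (x : nat) :
  NoDup (l1 ++ l2) -> In x l1 -> ~ In x l2.
Proof.
  induction l1 as [| y l IH]; simpl; intros Hnd Hx; [contradiction |].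
  inversion Hnd as [| ? ? Hy Hnd']; subst.
  destruct Hx as [<- | Hx].
  - intro H; apply Hy, in_or_app; auto.
  - auto.
Qed.

Lemma fully_balanced_size (t : tree) (h : nat) :
  fully_balanced t h -> length (leaves t) = (2 ^ h)%nat.
Proof.
  revert h; induction t as [k | a IHa b IHb]; intros [| h] H;
    simpl in *; try contradiction; auto.
  destruct H as [Ha Hb].
  rewrite length_app, (IHa _ Ha), (IHb _ Hb); lia.
Qed.

Lemma fully_balanced_depth (t : tree) (h i : nat) :
  fully_balanced t h -> In i (leaves t) -> depth_in t i = h.
Proof.
  revert h; induction t as [k | a IHa b IHb]; intros [| h] H Hi;
    simpl in *; try contradiction; auto.
  destruct H as [Ha Hb].
  destruct (in_dec Nat.eq_dec i (leaves a)) as [Hia | Hia].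
  - rewrite (IHa h); auto.
  - rewrite (IHb h); auto. apply in_app_or in Hi; tauto.
Qed.

Lemma path_sums_left (a b : tree) (addr : list bool) (len : lengths) (i : nat) :
  In i (leaves a) ->
  ES_aux (Node a b) addr len i
    = len (false :: addr) / 2 ^ depth_in a i + ES_aux a (false :: addr) len i /\
  FP_aux (Node a b) addr len i
    = len (false :: addr) / INR (length (leaves a)) + FP_aux a (false :: addr) len i.
Proof.
  intros Hi; simpl.
  destruct (in_dec Nat.eq_dec i (leaves a)); [split; reflexivity | contradiction].
Qed.

Lemma path_sums_right (a b : tree) (addr : list bool) (len : lengths) (i : nat) :
  ~ In i (leaves a) -> In i (leaves b) ->
  ES_aux (Node a b) addr len i
    = len (true :: addr) / 2 ^ depth_in b i + ES_aux b (true :: addr) len i /\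
  FP_aux (Node a b) addr len i
    = len (true :: addr) / INR (length (leaves b)) + FP_aux b (true :: addr) len i.
Proof.
  intros Hia Hib; simpl.
  destruct (in_dec Nat.eq_dec i (leaves a)); [contradiction |].
  destruct (in_dec Nat.eq_dec i (leaves b)); [split; reflexivity | contradiction].
Qed.

Lemma path_sums_local (t : tree) (addr : list bool) (len len' : lengths) (i : nat) :
  (forall e, (length addr < length e)%nat -> len e = len' e) ->
  ES_aux t addr len i = ES_aux t addr len' i /\
  FP_aux t addr len i = FP_aux t addr len' i.
Proof.
  revert addr; induction t as [k | a IHa b IHb]; intros addr H; simpl;
    [split; reflexivity |].
  destruct (IHa (false :: addr)) as [Ea Fa]; [intros e He; apply H; simpl in He; lia |].
  destruct (IHb (true :: addr)) as [Eb Fb]; [intros e He; apply H; simpl in He; lia |].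
  rewrite (H (false :: addr)), (H (true :: addr)) by (simpl; lia).
  rewrite Ea, Fa, Eb, Fb; split; reflexivity.
Qed.

(* Sufficiency at one node: if both children are fully balanced and ES = FP
   holds inside them, it holds at the node, since the top edge above a leaf
   of a fully balanced subtree of height h has coefficient 1/2^h = 1/n(e). *)
Lemma node_path_sums_eq (a b : tree) (h1 h2 : nat) (addr : list bool)
    (len : lengths) (i : nat) :
  fully_balanced a h1 -> fully_balanced b h2 ->
  ES_aux a (false :: addr) len i = FP_aux a (false :: addr) len i ->
  ES_aux b (true :: addr) len i = FP_aux b (true :: addr) len i ->
  ES_aux (Node a b) addr len i = FP_aux (Node a b) addr len i.
Proof.
  intros Ha Hb Ea Eb.
  assert (pow2 : forall h, INR (2 ^ h) = 2 ^ h)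
    by (intro h; rewrite pow_INR; reflexivity).
  destruct (in_dec Nat.eq_dec i (leaves a)) as [Hia | Hia].
  - destruct (path_sums_left a b addr len i Hia) as [-> ->].
    rewrite (fully_balanced_depth _ _ _ Ha Hia), (fully_balanced_size _ _ Ha),
      pow2, Ea; reflexivity.
  - destruct (in_dec Nat.eq_dec i (leaves b)) as [Hib | Hib].
    + destruct (path_sums_right a b addr len i Hia Hib) as [-> ->].
      rewrite (fully_balanced_depth _ _ _ Hb Hib), (fully_balanced_size _ _ Hb),
        pow2, Eb; reflexivity.
    + simpl; destruct (in_dec Nat.eq_dec i (leaves a)); [contradiction |].
      destruct (in_dec Nat.eq_dec i (leaves b)); [contradiction | reflexivity].
Qed.

Lemma fully_balanced_path_sums_eq (t : tree) (h : nat) (addr : list bool)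
    (len : lengths) (i : nat) :
  fully_balanced t h -> ES_aux t addr len i = FP_aux t addr len i.
Proof.
  revert h addr; induction t as [k | a IHa b IHb]; intros [| h] addr H;
    simpl in H; try contradiction.
  - reflexivity.
  - destruct H as [Ha Hb].
    apply (node_path_sums_eq a b h h); eauto.
Qed.

(* Coefficient extraction: if  l(e)*c + F(l) = l(e)*c' + G(l)  for all
   positive lengths l, and F, G do not read the length of e, then c = c'
   and F = G on positive lengths (compare l = 1 with l = 1 except l(e) = 2). *)
Lemma coefficient_extraction (e : list bool) (c c' : R) (F G : lengths -> R) :
  (forall len : lengths, (forall e', 0 < len e') ->
     len e * c + F len = len e * c' + G len) ->
  (forall len len' : lengths, (forall e', e' <> e -> len e' = len' e') ->
     F len = F len' /\ G len = G len') ->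
  c = c' /\ (forall len : lengths, (forall e', 0 < len e') -> F len = G len).
Proof.
  intros Hsum Hloc.
  set (one := fun _ : list bool => 1).
  set (bump := fun e' : list bool => if list_eq_dec Bool.bool_dec e' e then 2 else 1).
  assert (one_pos : forall e', 0 < one e') by (intro; unfold one; lra).
  assert (bump_pos : forall e', 0 < bump e')
    by (intro; unfold bump; destruct list_eq_dec; lra).
  assert (bump_e : bump e = 2) by (unfold bump; destruct list_eq_dec; congruence).
  destruct (Hloc one bump) as [HF HG].
  { intros e' He'; unfold one, bump; destruct list_eq_dec; congruence. }
  pose proof (Hsum one one_pos) as E1; pose proof (Hsum bump bump_pos) as E2.
  unfold one at 1 3 in E1; rewrite bump_e, <- HF, <- HG in E2.
  assert (Hc : c = c') by lra.
  split; [exact Hc |].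
  intros len Hpos; specialize (Hsum len Hpos); rewrite Hc in Hsum; lra.
Qed.

Definition path_sums_agree (t : tree) (addr : list bool) : Prop :=
  forall len : lengths, (forall e, 0 < len e) ->
  forall i, In i (leaves t) -> ES_aux t addr len i = FP_aux t addr len i.

Definition top_coefficients_match (t : tree) : Prop :=
  forall i, In i (leaves t) -> (2 ^ depth_in t i)%nat = length (leaves t).

Lemma peel_edge (s : tree) (a : list bool) (i : nat) (ES_up FP_up : lengths -> R) :
  In i (leaves s) ->
  (forall len : lengths, (forall e, 0 < len e) -> ES_up len = FP_up len) ->
  (forall len, ES_up len = len a / 2 ^ depth_in s i + ES_aux s a len i) ->
  (forall len, FP_up len = len a / INR (length (leaves s)) + FP_aux s a len i) ->
  (2 ^ depth_in s i)%nat = length (leaves s) /\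
  (forall len : lengths, (forall e, 0 < len e) -> ES_aux s a len i = FP_aux s a len i).
Proof.
  intros Hi Hup HES HFP.
  destruct (coefficient_extraction a (/ 2 ^ depth_in s i) (/ INR (length (leaves s)))
              (fun len => ES_aux s a len i) (fun len => FP_aux s a len i))
    as [Hc Hbelow].
  - intros len Hpos; specialize (Hup len Hpos).
    rewrite HES, HFP in Hup; exact Hup.
  - intros len len' Hdiff; apply path_sums_local.
    intros e He; apply Hdiff; intros ->; lia.
  - split; [| exact Hbelow].
    apply INR_eq; rewrite pow_INR.
    apply Rinv_eq_reg; rewrite <- Hc; reflexivity.
Qed.

Lemma path_sums_agree_children (a b : tree) (addr : list bool) :
  NoDup (leaves (Node a b)) -> path_sums_agree (Node a b) addr ->
  top_coefficients_match a /\ path_sums_agree a (false :: addr) /\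
  top_coefficients_match b /\ path_sums_agree b (true :: addr).
Proof.
  intros Hnd Hagree; simpl in Hnd.
  assert (in_node : forall i, In i (leaves a) \/ In i (leaves b) ->
            In i (leaves (Node a b))) by (intros; apply in_or_app; auto).
  assert (Ha : forall i, In i (leaves a) ->
            (2 ^ depth_in a i)%nat = length (leaves a) /\
            (forall len : lengths, (forall e, 0 < len e) ->
               ES_aux a (false :: addr) len i = FP_aux a (false :: addr) len i)).
  { intros i Hi.
    apply (peel_edge a (false :: addr) i
             (fun len => ES_aux (Node a b) addr len i)
             (fun len => FP_aux (Node a b) addr len i)); auto;
      intro len; apply (path_sums_left a b addr len i Hi). }
  assert (Hb : forall i, In i (leaves b) ->
            (2 ^ depth_in b i)%nat = length (leaves b) /\
            (forall len : lengths, (forall e, 0 < len e) ->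
               ES_aux b (true :: addr) len i = FP_aux b (true :: addr) len i)).
  { intros i Hi.
    assert (Hia : ~ In i (leaves a))
      by (intro Hia; exact (NoDup_app_disjoint _ _ _ Hnd Hia Hi)).
    apply (peel_edge b (true :: addr) i
             (fun len => ES_aux (Node a b) addr len i)
             (fun len => FP_aux (Node a b) addr len i)); auto;
      intro len; apply (path_sums_right a b addr len i Hia Hi). }
  unfold top_coefficients_match, path_sums_agree.
  repeat split; intros; first [apply Ha | apply Hb]; auto.
Qed.

(* A subtree with hereditary agreement and matching top coefficients is
   fully balanced: by induction its children are fully balanced of heights
   h1, h2, and the top condition at a left leaf (depth h1 + 1) reads
   2^(h1+1) = 2^h1 + 2^h2, i.e. h1 = h2. *)
Lemma path_sums_agree_fully_balanced (t : tree) (addr : list bool) :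
  NoDup (leaves t) -> path_sums_agree t addr -> top_coefficients_match t ->
  exists h, fully_balanced t h.
Proof.
  revert addr; induction t as [k | a IHa b IHb]; intros addr Hnd Hagree Htop.
  - exists 0%nat; simpl; auto.
  - destruct (path_sums_agree_children a b addr Hnd Hagree) as (Ta & Ga & Tb & Gb).
    simpl in Hnd.
    destruct (IHa _ (NoDup_app_remove_r _ _ Hnd) Ga Ta) as [h1 H1].
    destruct (IHb _ (NoDup_app_remove_l _ _ Hnd) Gb Tb) as [h2 H2].
    destruct (leaves_nonempty a) as [x Hx].
    assert (Hroot := Htop x (in_or_app _ _ _ (or_introl Hx))).
    simpl in Hroot; destruct (in_dec Nat.eq_dec x (leaves a)); [| contradiction].
    rewrite (fully_balanced_depth _ _ _ H1 Hx), length_app,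
      (fully_balanced_size _ _ H1), (fully_balanced_size _ _ H2) in Hroot.
    simpl in Hroot.
    assert (h1 = h2) as <- by (apply (Nat.pow_inj_r 2); lia).
    exists (S h1); simpl; auto.
Qed.

Theorem theorem4 (n : nat) (T : tree) :
  (2 <= n)%nat -> is_RB n T ->
  ((forall len : lengths, (forall e, 0 < len e) ->
      forall i : nat, (1 <= i <= n)%nat -> ES T len i = FP T len i)
   <-> semi_balanced T).
Proof.
  intros Hn HRB; unfold is_RB in HRB.
  assert (Hnd : NoDup (leaves T))
    by exact (Permutation_NoDup (Permutation_sym HRB) (seq_NoDup n 1)).
  destruct T as [k | a b].
  - apply Permutation_length in HRB; rewrite length_seq in HRB; simpl in HRB; lia.
  - split.
    + intros Heq.
      assert (Hagree : path_sums_agree (Node a b) []).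
      { intros len Hpos i Hi; apply (Heq len Hpos).
        apply (Permutation_in _ HRB), in_seq in Hi; lia. }
      destruct (path_sums_agree_children a b [] Hnd Hagree) as (Ta & Ga & Tb & Gb).
      simpl in Hnd.
      destruct (path_sums_agree_fully_balanced a _ (NoDup_app_remove_r _ _ Hnd) Ga Ta)
        as [h1 H1].
      destruct (path_sums_agree_fully_balanced b _ (NoDup_app_remove_l _ _ Hnd) Gb Tb)
        as [h2 H2].
      exists h1, h2; auto.
    + intros (h1 & h2 & H1 & H2) len _ i _.
      apply (node_path_sums_eq a b h1 h2); eauto using fully_balanced_path_sums_eq.
Qed.
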